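(* Let $\Pi_q$ be a projective plane (not necessarily Desarguesian) of order $q\ge 2$, and let $s(2,q)$ denote the smallest size of a saturating set in $\Pi_q$. Then \[ s(2,q)\leq 2\sqrt{(q+1)\ln (q+1)}+2 . \]
   Context: A point set $S\subset \Pi_q$ is saturating if every point of $\Pi_q\setminus S$ is collinear with two points of $S$. Here $\ln$ denotes the natural logarithm. *)

From mathcomp Require Import all_boot.
Set Implicit Arguments. Unset Strict Implicit. Unset Printing Implicit Defensive.

Definition is_projective_plane (P L : finType) (inc : P -> L -> bool) (q : nat)
  : Prop :=
  (forall p1 p2 : P, p1 != p2 -> exists! l : L, inc p1 l && inc p2 l) /\
  (forall l1 l2 : L, l1 != l2 -> exists! p : P, inc p l1 && inc p l2) /\
  (* non-degeneracy: four distinct points, no three collinear *)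
  (exists a b c d : P, uniq [:: a; b; c; d] /\
     forall l : L, (inc a l + inc b l + inc c l + inc d l <= 2)%N) /\
  (forall l : L, #|[set p : P | inc p l]| = q.+1).

Definition saturating (P L : finType) (inc : P -> L -> bool) (S : {set P})
  : Prop :=
  forall p : P, p \notin S ->
    exists x y : P, [/\ x \in S, y \in S, x != y &
      exists l : L, [&& inc p l, inc x l & inc y l]].

(* Greedy construction.  Call a point unsaturated by S if it is outside S and on
   no line through two points of S.  For such a point p, the lines joining p to
   the points of S pairwise meet only in p (otherwise p would be saturated), so
   together with p they contain 1 + |S| q points, and adding any of them to S
   saturates p.  Averaging over the candidates x outside S, some x leaves at most
   |U| (|P| - 1 - |S| q) / (|P| - |S|) <= |U| exp (- (1 + |S| (q - 1)) / (q (q + 1)))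
   unsaturated points, where |U| is their number for S and |P| <= q^2 + q + 1.
   Starting from one point (at most q (q + 1) unsaturated points), after k more
   steps at most q (q + 1) exp (- (k + (q - 1) k (k + 1) / 2) / (q (q + 1))) remain,
   which is below 1 as soon as k >= 2 sqrt ((q + 1) ln (q + 1)). *)

From mathcomp Require Import all_boot zify.
From Stdlib Require Import Reals Lra.
Set Implicit Arguments. Unset Strict Implicit. Unset Printing Implicit Defensive.

Section RealBounds.
Local Open Scope R_scope.

Lemma exp_mulINR (n : nat) (x : R) : exp (INR n * x) = exp x ^ n.
Proof. by rewrite -Rpower_pow; [rewrite /Rpower ln_exp | apply: exp_pos]. Qed.

Lemma ln_le_sub1 (x : R) : 0 < x -> ln x <= x - 1.
Proof. by move=> x_gt0; have := exp_ineq1_le (ln x); rewrite exp_ln //; lra. Qed.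

Lemma ln_lt_sub1 (x : R) : 0 < x -> x <> 1 -> ln x < x - 1.
Proof.
move=> x_gt0 x_neq1.
have lnx_neq0 : ln x <> 0 by move=> lnx0; apply: x_neq1; rewrite -(exp_ln x) // lnx0 exp_0.
by have := exp_ineq1 _ lnx_neq0; rewrite exp_ln //; lra.
Qed.

Lemma ln4_lt : ln 4 < 3 / 2.
Proof.
have exp_ge : (1 + 3 / 20) ^ 10 <= exp (3 / 20) ^ 10.
  by apply: pow_incr; have := exp_ineq1_le (3 / 20); lra.
rewrite -(ln_exp (3 / 2)); apply: ln_increasing; first lra.
have -> : 3 / 2 = INR 10 * (3 / 20) by rewrite /=; lra.
by rewrite exp_mulINR; move: exp_ge => /=; lra.
Qed.

Lemma ln_le_quarter (x : R) : 0 < x -> ln x <= x / 4 + 1 / 2.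
Proof.
move=> x_gt0; have ln4 := ln4_lt.
have := @ln_le_sub1 (x / 4) ltac:(lra); rewrite /Rdiv ln_mult ?ln_Rinv; lra.
Qed.

Lemma ln_gt_two_thirds (x : R) : 3 <= x -> 2 / 3 < ln x.
Proof.
move=> x_ge3.
have inv_gt0 : 0 < / x by apply: Rinv_0_lt_compat; lra.
have inv_le : / x <= / 3 by apply: Rinv_le_contravar; lra.
have := @ln_lt_sub1 (/ x) inv_gt0 ltac:(lra).
rewrite ln_Rinv; lra.
Qed.

Lemma ln_lt_ln_add1_sub_inv (x : R) : 0 < x -> ln x < ln (x + 1) - / (x + 1).
Proof.
move=> x_gt0.
have inv_gt0 : 0 < / (x + 1) by apply: Rinv_0_lt_compat; lra.
have inv_lt1 : / (x + 1) < 1 by rewrite -Rinv_1; apply: Rinv_lt_contravar; lra.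
have := @ln_lt_sub1 (1 - / (x + 1)) ltac:(lra) ltac:(apply: Rlt_not_eq; lra).
have -> : ln (1 - / (x + 1)) = ln x - ln (x + 1).
  have -> : 1 - / (x + 1) = x * / (x + 1) by field; lra.
  by rewrite ln_mult ?ln_Rinv; lra.
lra.
Qed.

Lemma sqrt_mul_ln_ge (x : R) : 3 <= x -> 2 * ln x - 2 / 3 <= sqrt (x * ln x).
Proof.
move=> x_ge3.
have lnx_gt := ln_gt_two_thirds x_ge3.
have lnx_le := @ln_le_quarter x ltac:(lra).
have xlnx_ge0 : 0 <= x * ln x by nra.
have sqrt_sq := sqrt_sqrt _ xlnx_ge0.
have := sqrt_pos (x * ln x); nra.
Qed.

Definition greedy_rate (Q s : R) : R := (1 + s * (Q - 1)) / (Q * (Q + 1)).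

(* The sum of [greedy_rate Q j] for j = 1 .. k, see [greedy_exponentS]. *)
Definition greedy_exponent (Q k : R) : R :=
  (k + (Q - 1) * k * (k + 1) / 2) / (Q * (Q + 1)).

Lemma greedy_exponent0 (Q : R) : greedy_exponent Q 0 = 0.
Proof. by rewrite /greedy_exponent; lra. Qed.

Lemma greedy_exponentS (Q k : R) : 0 < Q ->
  greedy_exponent Q (k + 1) = greedy_exponent Q k + greedy_rate Q (k + 1).
Proof. by move=> Q_gt0; rewrite /greedy_exponent /greedy_rate; field; lra. Qed.

Lemma greedy_exponent_le (Q k k' : R) : 1 <= Q -> 0 <= k -> k <= k' ->
  greedy_exponent Q k <= greedy_exponent Q k'.
Proof.
move=> Q_ge1 k_ge0 le_kk'; rewrite /greedy_exponent /Rdiv.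
apply: Rmult_le_compat_r; first by apply/Rlt_le/Rinv_0_lt_compat; nra.
have : 0 <= (Q - 1) * (k' - k) * (k' + k + 1) by apply: Rmult_le_pos; nra.
nra.
Qed.

Lemma greedy_exponent_large (Q k : R) : 2 <= Q ->
  2 * sqrt ((Q + 1) * ln (Q + 1)) <= k -> ln (Q * (Q + 1)) < greedy_exponent Q k.
Proof.
move=> Q_ge2 le_k.
have M_ge3 : 3 <= Q + 1 by lra.
have lnQ := @ln_lt_ln_add1_sub_inv Q ltac:(lra).
rewrite ln_mult; [|lra|lra].
have s_ge := sqrt_mul_ln_ge M_ge3.
have L_gt := ln_gt_two_thirds M_ge3.
have ss : sqrt ((Q + 1) * ln (Q + 1)) * sqrt ((Q + 1) * ln (Q + 1))
          = (Q + 1) * ln (Q + 1) by apply: sqrt_sqrt; nra.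
have s_ge0 := sqrt_pos ((Q + 1) * ln (Q + 1)).
move: (ln (Q + 1)) (sqrt ((Q + 1) * ln (Q + 1))) le_k s_ge ss s_ge0 lnQ L_gt
  => L s le_k s_ge ss s_ge0 lnQ L_gt.
(* With s * s = (Q + 1) L this reduces to s >= 2 L - Q / (Q + 1). *)
have exponent_at_2s : 2 * L - / (Q + 1) <= greedy_exponent Q (2 * s).
  have -> : greedy_exponent Q (2 * s)
            = (2 * s + (Q - 1) * (2 * (s * s) + s)) / (Q * (Q + 1)).
    by rewrite /greedy_exponent; field; lra.
  have -> : 2 * L - / (Q + 1) = (2 * L * Q * (Q + 1) - Q) / (Q * (Q + 1)).
    by field; lra.
  rewrite ss /Rdiv; apply: Rmult_le_compat_r; first by apply/Rlt_le/Rinv_0_lt_compat; nra.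
  nra.
have := @greedy_exponent_le Q (2 * s) k ltac:(lra) ltac:(lra) le_k.
lra.
Qed.

Lemma greedy_rate_bound (Q S N : R) : 1 <= Q -> 1 <= S -> S < N ->
  N <= Q * (Q + 1) + 1 -> N - 1 - S * Q <= (N - S) * (1 - greedy_rate Q S).
Proof.
move=> Q_ge1 S_ge1 lt_SN N_le.
have QQ_gt0 : 0 < Q * (Q + 1) by nra.
have -> : (N - S) * (1 - greedy_rate Q S)
          = N - 1 - S * Q + (1 + S * (Q - 1)) * (Q * (Q + 1) + S - N) / (Q * (Q + 1)).
  by rewrite /greedy_rate; field; lra.
have : 0 <= (1 + S * (Q - 1)) * (Q * (Q + 1) + S - N) / (Q * (Q + 1)).
  by apply: Rmult_le_pos; [apply: Rmult_le_pos; nra | apply/Rlt_le/Rinv_0_lt_compat].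
lra.
Qed.

Lemma INR_leq (m n : nat) : (m <= n)%nat -> INR m <= INR n.
Proof. by move/leP/le_INR. Qed.

Lemma greedy_step (q s N u u' : nat) : (1 <= q)%nat -> (1 <= s)%nat -> (s < N)%nat ->
  (N <= q * q.+1 + 1)%nat -> (u' * (N - s) <= u * (N - (1 + s * q)))%nat ->
  INR u' <= INR u * exp (- greedy_rate (INR q) (INR s)).
Proof.
move=> q_ge1 s_ge1 lt_sN N_le le_u'.
have u_ge0 := pos_INR u.
case: (leqP (1 + s * q) N) => N_ge; last first.
  (* the truncated difference [N - (1 + s * q)] is 0 *)
  have -> : u' = 0%nat by nia.
  by apply: Rmult_le_pos => //; apply/Rlt_le/exp_pos.
have lt_sN_real := lt_INR _ _ (ltP lt_sN).
have rate_bound : INR N - 1 - INR s * INR q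
                  <= (INR N - INR s) * (1 - greedy_rate (INR q) (INR s)).
  apply: greedy_rate_bound => //; first exact: (INR_leq q_ge1).
  - exact: (INR_leq s_ge1).
  - by have := INR_leq N_le; rewrite plus_INR mult_INR S_INR.
have le_u'_real : INR u' * (INR N - INR s) <= INR u * (INR N - 1 - INR s * INR q).
  have := INR_leq le_u'.
  by rewrite !mult_INR !minus_INR ?plus_INR ?mult_INR ?INR_1; [lra | apply/leP; lia ..].
have le_u'_rate : INR u' <= INR u * (1 - greedy_rate (INR q) (INR s)).
  apply: (Rmult_le_reg_r (INR N - INR s)); first lra.
  by have := Rmult_le_compat_l _ _ _ u_ge0 rate_bound; lra.
apply: Rle_trans le_u'_rate _; apply: Rmult_le_compat_l => //.
by have := exp_ineq1_le (- greedy_rate (INR q) (INR s)); lra.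
Qed.

Lemma exists_nat_between (x : R) : 0 <= x -> exists K : nat, x <= INR K <= x + 1.
Proof.
move=> x_ge0; have [up_gt up_le] := archimed x.
have up_ge0 : (0 <= up x)%Z by apply: le_IZR; lra.
exists (Z.to_nat (up x)); rewrite INR_IZR_INZ Znat.Z2Nat.id //; lra.
Qed.

Lemma mul_exp_opp_lt1 (c F : R) : 0 < c -> ln c < F -> c * exp (- F) < 1.
Proof.
move=> c_gt0 lnc_lt; rewrite -[c in c * _](exp_ln c) // -exp_plus -exp_0.
by apply: exp_increasing; lra.
Qed.
End RealBounds.

Lemma card_bigcup_disjoint (I T : finType) (A : {set I}) (F : I -> {set T}) :
  {in A &, forall i j, i != j -> [disjoint F i & F j]} ->
  #|\bigcup_(i in A) F i| = \sum_(i in A) #|F i|.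
Proof.
move=> disjF; pose G i := if i \in A then F i else set0.
have -> : \bigcup_(i in A) F i = \bigcup_i G i by rewrite big_mkcond.
rewrite -sum1_card partition_disjoint_bigcup => [|i j ij]; last first.
  rewrite /G; case: ifP => iA; last by rewrite disjoints_subset sub0set.
  by case: ifP => jA; [exact: disjF | rewrite disjoint_sym disjoints_subset sub0set].
rewrite [RHS]big_mkcond; apply: eq_bigr => i _.
by rewrite sum1_card /G; case: ifP; rewrite ?cards0.
Qed.

Section ProjectivePlane.
Variables (P L : finType) (inc : P -> L -> bool) (q : nat).

Definition saturated_by (S : {set P}) (p : P) : bool :=
  [exists x in S, exists y in S, (x != y) && [exists l, [&& inc p l, inc x l & inc y l]]].

Definition unsaturated (S : {set P}) : {set P} :=
  [set p | (p \notin S) && ~~ saturated_by S p].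

Lemma saturating_unsaturated0 (S : {set P}) : unsaturated S = set0 -> saturating inc S.
Proof.
move=> U0 p p_notin_S.
have : p \notin unsaturated S by rewrite U0 inE.
rewrite inE p_notin_S negbK => /exists_inP[x xS /exists_inP[y yS /andP[xy]]].
by case/existsP=> l /and3P[pl xl yl]; exists x, y; split => //; exists l; rewrite pl xl yl.
Qed.

Lemma saturated_by_subset (S S' : {set P}) (p : P) :
  S \subset S' -> saturated_by S p -> saturated_by S' p.
Proof.
move=> sSS' /exists_inP[x xS /exists_inP[y yS xy_pl]].
by apply/exists_inP; exists x; rewrite ?(subsetP sSS') //; apply/exists_inP; exists y; rewrite ?(subsetP sSS').
Qed.

Lemma unsaturated_setU1 (S : {set P}) (x : P) : unsaturated (x |: S) \subset unsaturated S.
Proof.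
apply/subsetP => p; rewrite !inE negb_or => /andP[/andP[_ ->]] /=.
by apply: contra; apply: saturated_by_subset; apply: subsetUr.
Qed.

Definition punctured_line (p s : P) : {set P} :=
  [set y | (y != p) && [exists l, [&& inc p l, inc s l & inc y l]]].

Definition cone (p : P) (S : {set P}) : {set P} := \bigcup_(s in S) punctured_line p s.

Lemma not_in_cone (p : P) (S : {set P}) : p \notin cone p S.
Proof. by apply/bigcupP => -[s _]; rewrite inE eqxx. Qed.

Hypothesis plane : is_projective_plane inc q.

Lemma line_through (p1 p2 : P) : p1 != p2 -> exists l, inc p1 l && inc p2 l.
Proof. by case: plane => [join _] /join [l [p12l _]]; exists l. Qed.

Lemma line_unique (p1 p2 : P) (l l' : L) : p1 != p2 ->
  inc p1 l -> inc p2 l -> inc p1 l' -> inc p2 l' -> l = l'.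
Proof.
case: plane => [join _] /join [l0 [_ uniq_l0]] p1l p2l p1l' p2l'.
by rewrite -(uniq_l0 l) ?p1l ?p2l // -(uniq_l0 l') ?p1l' ?p2l'.
Qed.

Lemma lines_meet (l1 l2 : L) : l1 != l2 -> exists p, inc p l1 && inc p l2.
Proof. by case: plane => [_ [meet _]] /meet [p [pl12 _]]; exists p. Qed.

Lemma card_line (l : L) : #|[set p | inc p l]| = q.+1.
Proof. by case: plane => [_ [_ [_ ->]]]. Qed.

Lemma exists_point_off_line : exists a l, ~~ inc a l.
Proof.
case: plane => [_ [_ [[a [b [c [d [abcd noncollinear]]]]] _]]].
have bc : b != c by case/and4P: abcd => _ + _ _; rewrite !inE => /norP[].
case: (line_through bc) => l /andP[bl cl]; exists a, l.
apply/negP => al; have := noncollinear l; rewrite al bl cl.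
by case: (inc d l).
Qed.

Lemma punctured_lineE (p s : P) (l : L) : s != p -> inc p l -> inc s l ->
  punctured_line p s = [set y | inc y l] :\ p.
Proof.
move=> sp pl sl; apply/setP => y; rewrite !inE; case: (y =P p) => //= _.
apply/existsP/idP => [[l' /and3P[pl' sl' yl']]|yl]; last by exists l; rewrite pl sl yl.
by rewrite (line_unique sp sl pl sl' pl').
Qed.

Lemma card_punctured_line (p s : P) : s != p -> #|punctured_line p s| = q.
Proof.
move=> sp; case: (line_through sp) => l /andP[sl pl].
rewrite (punctured_lineE sp pl sl).
by have /eqP := cardsD1 p [set y | inc y l]; rewrite card_line inE pl eqSS => /eqP.
Qed.

Lemma card_cone (p : P) (S : {set P}) : p \in unsaturated S -> #|cone p S| = #|S| * q.
Proof.
rewrite inE => /andP[pS unsat_p].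
rewrite card_bigcup_disjoint => [|s t sS tS st].
  rewrite -sum_nat_const; apply: eq_bigr => s sS; apply: card_punctured_line.
  by apply: contraNneq pS => <-.
rewrite -setI_eq0; apply/eqP/setP => y; rewrite !inE.
apply/negP => /andP[/andP[yp /existsP[l /and3P[pl sl yl]]]].
case/andP => _ /existsP[l' /and3P[pl' tl' yl']].
rewrite -(line_unique yp yl pl yl' pl') in tl'.
apply: (negP unsat_p); apply/exists_inP; exists s => //; apply/exists_inP; exists t => //.
by rewrite st; apply/existsP; exists l; rewrite pl sl tl'.
Qed.

Lemma card_points : #|P| <= q * q.+1 + 1.
Proof.
case: exists_point_off_line => a [l al].
have a_unsat : a \in unsaturated [set z | inc z l].
  rewrite !inE al /=; apply/exists_inP => -[x xl /exists_inP[y yl /andP[xy]]].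
  case/existsP=> l' /and3P[al' xl' yl']; rewrite !inE in xl yl.
  by move: al; rewrite (line_unique xy xl yl xl' yl') al'.
have cover : [set~ a] \subset cone a [set z | inc z l].
  apply/subsetP => y; rewrite !inE => ya.
  case: (line_through ya) => m /andP[ym am].
  have ml : m != l by apply: contraNneq al => <-.
  case: (lines_meet ml) => z /andP[zm zl].
  apply/bigcupP; exists z; first by rewrite inE.
  by rewrite inE ya; apply/existsP; exists m; rewrite am zm ym.
have := subset_leq_card cover; rewrite cardsC1 card_cone // card_line.
have : 0 < #|P| by apply/card_gt0P; exists a.
lia.
Qed.

Lemma card_keeping_unsaturated (p : P) (S : {set P}) : p \in unsaturated S ->
  #|[set x in ~: S | p \in unsaturated (x |: S)]| + (1 + #|S| * q) <= #|P|.
Proof.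
move=> p_unsat.
have sub : [set x in ~: S | p \in unsaturated (x |: S)] \subset ~: (p |: cone p S).
  apply/subsetP => x; rewrite !inE negb_or => /and3P[xS /andP[px _] unsat_p].
  rewrite negb_or eq_sym px /=; apply/bigcupP => -[s sS].
  rewrite inE => /andP[_ /existsP[l /and3P[pl sl xl]]].
  apply: (negP unsat_p); apply/exists_inP; exists x; rewrite ?setU11 //.
  apply/exists_inP; exists s; rewrite ?setU1r //.
  have xs : x != s by apply: contraNneq xS => ->.
  by rewrite xs; apply/existsP; exists l; rewrite pl xl sl.
have := subset_leq_card sub; have := cardsC (p |: cone p S).
rewrite cardsU1 not_in_cone card_cone //=.
lia.
Qed.

Lemma exists_good_extension (S : {set P}) : unsaturated S != set0 ->
  exists2 x, x \notin S &
    #|unsaturated (x |: S)| * #|~: S| <= #|unsaturated S| * (#|P| - (1 + #|S| * q)).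
Proof.
case/set0Pn => p0; rewrite !inE => /andP[p0S _].
pose f x := #|unsaturated (x |: S)|.
have p0S' : p0 \in ~: S by rewrite inE.
case: (arg_minnP f p0S') => x xS x_min.
exists x; first by rewrite -in_setC.
pose keep p := [set y in ~: S | p \in unsaturated (y |: S)].
have double_count : \sum_(y in ~: S) f y = \sum_p #|keep p|.
  rewrite /f /keep; under eq_bigr => y _ do rewrite -sum1_card big_mkcond /=.
  rewrite exchange_big; apply: eq_bigr => p _.
  by rewrite -sum1_card -big_mkcondr; apply: eq_bigl => y; rewrite !inE.
have keep_bound p :
    #|keep p| <= (if p \in unsaturated S then #|P| - (1 + #|S| * q) else 0).
  case: ifP => [p_unsat | p_sat].
    by have := card_keeping_unsaturated p_unsat; rewrite /keep; lia.
  rewrite leqn0 cards_eq0; apply/eqP/setP => y; rewrite in_set in_set0.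
  by apply: contraFF p_sat => /andP[_]; apply/subsetP/unsaturated_setU1.
rewrite mulnC -sum_nat_const.
apply: (@leq_trans (\sum_(y in ~: S) f y)); first exact: leq_sum.
rewrite double_count -sum_nat_const [in X in _ <= X]big_mkcond /=.
by apply: leq_sum => p _; apply: keep_bound.
Qed.

Lemma greedy_bound (k : nat) : 1 <= q -> exists S : {set P},
  (#|S| = k.+1 /\
   (INR #|unsaturated S| <= INR (q * q.+1) * exp (- greedy_exponent (INR q) (INR k)))%R)
  \/ (#|S| <= k.+1 /\ unsaturated S = set0).
Proof.
move=> q_ge1; elim: k => [|k [S [[card_S bound_S] | [card_S U0]]]].
- case: exists_point_off_line => a _; exists [set a]; left; split; first exact: cards1.
  rewrite greedy_exponent0 Ropp_0 exp_0 Rmult_1_r; apply: INR_leq.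
  have : unsaturated [set a] \subset [set~ a] by apply/subsetP => p; rewrite !inE => /andP[].
  by move/subset_leq_card; rewrite cardsC1; have := card_points; lia.
- case: (eqVneq (unsaturated S) set0) => [U0 | U_neq0].
    by exists S; right; rewrite card_S.
  have [x xS good_x] := exists_good_extension U_neq0.
  exists (x |: S); left; split; first by rewrite cardsU1 xS card_S.
  have card_SC : #|~: S| = #|P| - #|S| by rewrite -(cardsC S) addKn.
  have S_lt : #|S| < #|P|.
    by rewrite -(cardsC S) -addn1 leq_add2l; apply/card_gt0P; exists x; rewrite inE.
  rewrite card_SC card_S in good_x S_lt.
  have := greedy_step q_ge1 (ltn0Sn k) S_lt card_points good_x.
  rewrite S_INR greedy_exponentS; last by apply: (lt_INR 0); apply/ltP.
  rewrite Ropp_plus_distr exp_plus -Rmult_assoc => /Rle_trans; apply.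
  by apply: Rmult_le_compat_r => //; apply/Rlt_le/exp_pos.
- by exists S; right; split => //; apply: leqW.
Qed.
End ProjectivePlane.

Theorem theorem1 (P L : finType) (inc : P -> L -> bool) (q : nat) :
  (2 <= q)%N -> is_projective_plane inc q ->
  exists S : {set P}, saturating inc S /\
    (INR #|S| <= 2 * sqrt (INR (q + 1) * ln (INR (q + 1))) + 2)%R.
Proof.
move=> q_ge2 plane.
have Q_ge2 : (2 <= INR q)%R by have := INR_leq q_ge2; rewrite /=; lra.
have bound_ge0 : (0 <= 2 * sqrt (INR (q + 1) * ln (INR (q + 1))))%R.
  by have := sqrt_pos (INR (q + 1) * ln (INR (q + 1))); lra.
have [K [le_K K_le]] := exists_nat_between bound_ge0.
have [S [[card_S unsat_S] | [card_S unsat_S]]] := greedy_bound plane K (ltnW q_ge2).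
- exists S; split.
    apply: saturating_unsaturated0; apply: cards0_eq; apply/eqP; rewrite -leqn0 leqNgt.
    apply/negP => /INR_leq; apply: Rlt_not_le; apply: Rle_lt_trans unsat_S _.
    rewrite plus_INR INR_1 in le_K; rewrite mult_INR S_INR.
    apply: mul_exp_opp_lt1; first nra.
    exact: greedy_exponent_large.
  by rewrite card_S S_INR; lra.
- exists S; split; first exact: saturating_unsaturated0.
  by have := INR_leq card_S; rewrite S_INR; lra.
Qed.
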